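(* Consider $n$ parallel roads (indexed by $i\in[n]$) shared by $m$ vehicle types (indexed by $j\in[m]$), vehicle type $j$ having demand $\bar f^j\ge0$. A feasible routing is $f=(f^j_i)$ with $f^j_i\ge0$ and $\sum_i f^j_i=\bar f^j$ for each $j$. Road $i$ has latency $\ell_i(f)=b_i+\sum_j a^j_i f^j_i$, where $b_i\ge 0$ and the latency of every road is strictly increasing in the flow of each vehicle type on it (i.e. $a^j_i>0$ for all $i,j$). The social cost is $J(f)=\sum_i\big(\sum_j f^j_i\big)\ell_i(f)$. Given tolls $\tau=(\tau^j_i)$, the cost experienced by type $j$ on road $i$ is $c^j_i(f)=\ell_i(f)+\tau^j_i$, and a feasible routing $f$ is an equilibrium if for every $j$ and every road $i$ with $f^j_i>0$ one has $c^j_i(f)\le c^j_{i'}(f)$ for all $i'\in[n]$. For a routing $f$, let $\mathcal N^f_j=\{i: f^j_i>0\}$, and let $G(f)$ be the bipartite graph on the roads and the vehicle types with an edge between road $i$ and type $j$ iff $f^j_i>0$. Let $f^*$ be a feasible routing minimizing $J$ such that $G(f^* )$ is acyclic. Let $\mu$ be a constant, and levy the tolls $$\tau^j_i(f^* )=\begin{cases}\mu-\ell_i(f^* ) & \text{if } i\in\mathcal N^{f^*}_j,\\ P & \text{otherwise.}\end{cases}$$ Then, for sufficiently large $P$, the only equilibrium under these tolls is $f^*$.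
   Context: Parallel-road network with multiple vehicle types, affine road latencies with type-dependent coefficients, social cost equal to total latency; tolls may be vehicle-type- and road-specific. The existence of a socially optimal routing $f^*$ with acyclic $G(f^* )$ is guaranteed for this model. *)

From HB Require Import structures.
From mathcomp Require Import all_boot all_order all_algebra.
From mathcomp Require Import reals.
Set Implicit Arguments. Unset Strict Implicit. Unset Printing Implicit Defensive.
Import Order.TTheory GRing.Theory Num.Theory.
Local Open Scope ring_scope.

Section Routing.
Variables (R : realType) (n m : nat).
(* roads are 'I_n, vehicle types are 'I_m; a routing f i j = f^j_i *)
Definition routing := 'I_n -> 'I_m -> R.

Definition feasible (d : 'I_m -> R) (f : routing) : Prop :=
  (forall i j, 0 <= f i j) /\ (forall j, \sum_(i < n) f i j = d j).

Definition latency (a : 'I_n -> 'I_m -> R) (b : 'I_n -> R) (f : routing) (i : 'I_n) : R :=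
  b i + \sum_(j < m) a i j * f i j.

Definition social_cost a b (f : routing) : R :=
  \sum_(i < n) (\sum_(j < m) f i j) * latency a b f i.

Definition cost a b (tau : 'I_n -> 'I_m -> R) (f : routing) (i : 'I_n) (j : 'I_m) : R :=
  latency a b f i + tau i j.

Definition equilibrium a b d tau (f : routing) : Prop :=
  feasible d f /\
  forall (j : 'I_m) (i : 'I_n), 0 < f i j ->
    forall i' : 'I_n, cost a b tau f i j <= cost a b tau f i' j.

Definition support_graph (f : routing) : rel ('I_n + 'I_m)%type :=
  fun u v => match u, v with
             | inl i, inr j => 0 < f i j
             | inr j, inl i => 0 < f i j
             | _, _ => false
             end.

Definition acyclic_graph (T : eqType) (e : rel T) : Prop :=
  forall c : seq T, (2 < size c)%N -> ~ ucycle e c.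

Definition opt_tolls a b (fstar : routing) (mu P : R) : 'I_n -> 'I_m -> R :=
  fun i j => if 0 < fstar i j then mu - latency a b fstar i else P.
End Routing.

(** Once P exceeds every cost type j can meet on a road that fstar uses for j,
    an equilibrium f only uses such roads, and there the toll makes the cost
    of road i equal to mu + δ_i with δ_i = ℓ_i(f) - ℓ_i(fstar).  Hence
    δ_i <= δ_i' whenever f sends type j on road i and fstar sends it on i'.
    If f ≠ fstar, let g = f - fstar.  Leave a road with δ >= 0 along a type
    with g > 0; as the column sums of g vanish, that type has a road with
    g < 0, whose δ is at least as large, hence >= 0; as δ_i = Σ_j a_ij g_ij,
    this road has another type with g > 0, and so on (symmetrically when
    δ < 0).  This walk never backtracks and runs in the finite graph
    G(fstar), so it closes a cycle. *)
From HB Require Import structures.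
From mathcomp Require Import all_boot all_order all_algebra.
From mathcomp Require Import reals lra.
Set Implicit Arguments. Unset Strict Implicit. Unset Printing Implicit Defensive.
Import Order.TTheory GRing.Theory Num.Theory.

Section NonBacktrackingWalk.
Variables (T : finType) (e S : rel T).
Hypotheses (S_irr : irreflexive S) (S_sub : subrel S e).
Hypothesis S_ext : forall u v, S u v -> exists2 w, w != u & S v w.

(* The S-walk ..., y, x without repeated vertices, stored latest vertex first
   as [:: x, y & s]. *)
Definition rev_walk x y s :=
  [&& S y x, path (fun u v => S v u) y s & uniq [:: x, y & s]].

Lemma rev_walk_extend x y s : rev_walk x y s ->
  (exists w, rev_walk w x (y :: s)) \/ exists c, (2 < size c)%N /\ ucycle e c.
Proof.
case/and3P=> Syx walk_s uniq_s; have [w wNy Sxw] := S_ext Syx.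
have [w_in | w_notin] := boolP (w \in [:: x, y & s]); last first.
  left; exists w.
  by rewrite /rev_walk cons_uniq w_notin uniq_s /= Sxw Syx walk_s.
right; have wNx : w != x by apply: contraTneq Sxw => ->; rewrite S_irr.
have w_s : w \in s by move: w_in; rewrite !inE (negbTE wNx) (negbTE wNy).
move: walk_s uniq_s; case/splitPr: w_s => s1 s2 walk_s uniq_s.
exists (rev [:: x, y & rcons s1 w]); split.
  by rewrite size_rev /= size_rcons.
rewrite /ucycle rev_uniq rev_cycle; apply/andP; split.
  apply: sub_cycle (fun u v => @S_sub v u) _ _.
  move: walk_s; rewrite cat_path /= => /and3P[walk_s1 Sw _].
  by rewrite Syx !rcons_path walk_s1 Sw last_rcons Sxw.
apply: subseq_uniq uniq_s; rewrite /= !eqxx -cats1.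
by apply: cat_subseq (subseq_refl s1) _; rewrite /= eqxx sub0seq.
Qed.

Lemma nonbacktracking_cycle u v : S u v ->
  exists c, (2 < size c)%N /\ ucycle e c.
Proof.
move=> Suv.
have walk_or_cycle k : (exists x y s, size s = k /\ rev_walk x y s) \/
    exists c, (2 < size c)%N /\ ucycle e c.
  elim: k => [|k [[x [y [s [<- walk_s]]]] | cycle_c]]; last by right.
  - left; exists v, u, [::]; split=> //; rewrite /rev_walk Suv /= inE andbT.
    by apply: contraTneq Suv => ->; rewrite S_irr.
  - case: (rev_walk_extend walk_s) => [[w walk_w] | ]; last by right.
    by left; exists w, x, (y :: s).
case: (walk_or_cycle #|T|) => // -[x [y [s [size_s /and3P[_ _ /card_uniqP]]]]].
move=> card_s; have := max_card (mem [:: x, y & s]).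
by rewrite card_s /= size_s => /(leq_trans (leqnSn _)); rewrite ltnn.
Qed.

End NonBacktrackingWalk.

Local Open Scope ring_scope.

Lemma sumr_ge0_has_gt0 (R : realDomainType) k (h : 'I_k -> R) j :
  0 <= \sum_i h i -> h j < 0 -> exists i, 0 < h i.
Proof.
move=> sum_ge0 hj_lt0; case: (pickP (fun i => 0 < h i)) => [i hi | h_le0].
  by exists i.
suff : \sum_i h i < 0 by rewrite ltNge sum_ge0.
rewrite (bigD1 j) //= ltr_wnDr // sumr_le0 // => i _.
by rewrite leNgt h_le0.
Qed.

Lemma sumr_le0_has_lt0 (R : realDomainType) k (h : 'I_k -> R) j :
  \sum_i h i <= 0 -> 0 < h j -> exists i, h i < 0.
Proof.
move=> sum_le0 hj_gt0.
have [i hi] : exists i, 0 < - h i.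
  by apply: (sumr_ge0_has_gt0 (j := j)); rewrite ?oppr_lt0 // sumrN oppr_ge0.
by exists i; rewrite -oppr_gt0.
Qed.

Section Latency.
Variables (R : realType) (n m : nat) (a : 'I_n -> 'I_m -> R) (b : 'I_n -> R).

Definition latency_bound (d : 'I_m -> R) := \sum_i latency a b (fun=> d) i.

Lemma eq_latency (f g : routing R n m) :
  f =2 g -> latency a b f =1 latency a b g.
Proof. by move=> fg i; congr (_ + _); apply: eq_bigr => j _; rewrite fg. Qed.

Lemma latencyB (f g : routing R n m) i :
  latency a b f i - latency a b g i = \sum_j a i j * (f i j - g i j).
Proof.
rewrite /latency opprD addrACA subrr add0r -sumrB.
by apply: eq_bigr => j _; rewrite mulrBr.
Qed.

Lemma eq_equilibrium d tau (f g : routing R n m) :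
  f =2 g -> equilibrium a b d tau f -> equilibrium a b d tau g.
Proof.
move=> fg [[f_ge0 f_sum] f_eq]; split; first split.
- by move=> i j; rewrite -fg.
- by move=> j; rewrite -f_sum; apply: eq_bigr => i _; rewrite fg.
move=> j i; rewrite -fg => /f_eq le_cost i'.
by rewrite /cost -(eq_latency fg i) -(eq_latency fg i'); apply: le_cost.
Qed.

Lemma feasible_le_demand d (f : routing R n m) i j :
  feasible d f -> f i j <= d j.
Proof.
by case=> f_ge0 f_sum; rewrite -f_sum (bigD1 i) //= lerDl sumr_ge0.
Qed.

Hypotheses (a_ge0 : forall i j, 0 <= a i j) (b_ge0 : forall i, 0 <= b i).

Lemma latency_ge0 (f : routing R n m) i :
  (forall j, 0 <= f i j) -> 0 <= latency a b f i.
Proof.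
by move=> f_ge0; rewrite addr_ge0 // sumr_ge0 // => j _; rewrite mulr_ge0.
Qed.

Lemma le_latency (f g : routing R n m) i :
  (forall j, f i j <= g i j) -> latency a b f i <= latency a b g i.
Proof.
by move=> fg; rewrite lerD2l ler_sum // => j _; rewrite ler_wpM2l.
Qed.

Lemma latency_bound_ge0 d : (forall j, 0 <= d j) -> 0 <= latency_bound d.
Proof. by move=> d_ge0; rewrite sumr_ge0 // => i _; rewrite latency_ge0. Qed.

Lemma feasible_latency_le d (f : routing R n m) i :
  feasible d f -> latency a b f i <= latency_bound d.
Proof.
move=> f_feas; have d_ge0 j : 0 <= d j.
  by apply: le_trans _ (feasible_le_demand i j f_feas); apply: f_feas.1.
apply: le_trans (le_latency (g := fun=> d) (feasible_le_demand i ^~ f_feas)) _.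
rewrite /latency_bound (bigD1 i) //= lerDl sumr_ge0 // => k _.
by rewrite latency_ge0.
Qed.

End Latency.

Section OptimalTolls.
Variables (R : realType) (n m : nat) (a : 'I_n -> 'I_m -> R) (b : 'I_n -> R).
Variables (d : 'I_m -> R) (fstar : routing R n m) (mu : R).
Hypotheses (a_gt0 : forall i j, 0 < a i j) (b_ge0 : forall i, 0 <= b i).
Hypothesis fstar_feasible : feasible d fstar.

Let a_ge0 i j : 0 <= a i j := ltW (a_gt0 i j).
Let fstar_ge0 i j : 0 <= fstar i j := fstar_feasible.1 i j.

Lemma opt_tolls_equilibrium P :
  mu <= P -> equilibrium a b d (opt_tolls a b fstar mu P) fstar.
Proof.
move=> mu_le_P; split=> // j i fstar_ij i'.
rewrite /cost /opt_tolls fstar_ij addrC subrK; case: ifP => _.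
  by rewrite addrC subrK.
by rewrite ler_wpDl // latency_ge0.
Qed.

Section Uniqueness.
Variables (P : R) (f : routing R n m).
Hypothesis P_large : mu + latency_bound a b d < P.
Hypothesis f_equilibrium : equilibrium a b d (opt_tolls a b fstar mu P) f.

Let f_feasible : feasible d f := f_equilibrium.1.
Let f_ge0 i j : 0 <= f i j := f_feasible.1 i j.
Let flow_diff i j := f i j - fstar i j.
Let latency_diff i := latency a b f i - latency a b fstar i.

Lemma sum_flow_diff j : \sum_i flow_diff i j = 0.
Proof. by rewrite sumrB fstar_feasible.2 f_feasible.2 subrr. Qed.

Let flow_diff_gt0 i j : 0 < flow_diff i j -> 0 < f i j.
Proof. by rewrite subr_gt0; apply: le_lt_trans. Qed.

Let flow_diff_lt0 i j : flow_diff i j < 0 -> 0 < fstar i j.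
Proof. by rewrite subr_lt0; apply: le_lt_trans. Qed.

Lemma equilibrium_support i j : 0 < f i j -> 0 < fstar i j.
Proof.
move=> f_ij; rewrite ltNge; apply/negP => fstar_ij.
have [k /flow_diff_lt0 fstar_k] : exists k, flow_diff k j < 0.
  apply: (sumr_le0_has_lt0 (j := i)); first by rewrite sum_flow_diff.
  by rewrite subr_gt0 (le_lt_trans fstar_ij).
have := f_equilibrium.2 j i f_ij k.
rewrite /cost /opt_tolls fstar_k ltNge fstar_ij /=.
have := feasible_latency_le a_ge0 b_ge0 k f_feasible.
have := latency_ge0 a_ge0 b_ge0 (f_ge0 i).
have := latency_ge0 a_ge0 b_ge0 (fstar_ge0 k).
move: P_large; lra.
Qed.

Lemma equilibrium_latency_diff_le i i' j :
  0 < f i j -> 0 < fstar i' j -> latency_diff i <= latency_diff i'.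
Proof.
move=> f_ij fstar_i'j; have := f_equilibrium.2 j i f_ij i'.
by rewrite /cost /opt_tolls fstar_i'j equilibrium_support // /latency_diff; lra.
Qed.

Let flow_diff_support i j : flow_diff i j != 0 -> 0 < fstar i j.
Proof.
rewrite neq_lt => /orP[/flow_diff_lt0 // | /flow_diff_gt0].
exact: equilibrium_support.
Qed.

(* Orienting g by the sign of δ_i makes the walk rule uniform: leave a road
   along a positive entry, leave a type along a negative one. *)
Let road_sign i : R := if 0 <= latency_diff i then 1 else -1.
Let signed_diff i j := road_sign i * flow_diff i j.

Let latency_diffE i : latency_diff i = \sum_j a i j * flow_diff i j.
Proof. exact: latencyB. Qed.

Lemma signed_latency_diff i :
  \sum_j a i j * signed_diff i j = `|latency_diff i|.
Proof.
under eq_bigr do rewrite mulrCA.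
rewrite -mulr_sumr -latency_diffE /road_sign; case: ifP => [up | /negbT down].
  by rewrite mul1r ger0_norm.
by rewrite mulN1r ler0_norm // ltW // ltNge.
Qed.

Lemma signed_diff_road_step i j :
  signed_diff i j < 0 -> exists k, 0 < signed_diff i k.
Proof.
move=> s_ij; have a_s_ij : a i j * signed_diff i j < 0 by rewrite pmulr_rlt0.
have sum_ge0 : 0 <= \sum_k a i k * signed_diff i k.
  by rewrite signed_latency_diff.
by have [k] := sumr_ge0_has_gt0 sum_ge0 a_s_ij; rewrite pmulr_rgt0 //; exists k.
Qed.

Lemma signed_diff_type_step i j :
  0 < signed_diff i j -> exists k, signed_diff k j < 0.
Proof.
have sum_le0 : \sum_k flow_diff k j <= 0 by rewrite sum_flow_diff.
have sum_ge0 : 0 <= \sum_k flow_diff k j by rewrite sum_flow_diff.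
rewrite /signed_diff /road_sign; case: ifP => [up | /negbT down].
  rewrite mul1r => /[dup] g_ij /(sumr_le0_has_lt0 sum_le0) [k g_k].
  have up_k : 0 <= latency_diff k.
    apply: le_trans up (equilibrium_latency_diff_le _ (flow_diff_lt0 g_k)).
    exact: flow_diff_gt0.
  by exists k; rewrite up_k mul1r.
rewrite mulN1r oppr_gt0 => /[dup] g_ij /(sumr_ge0_has_gt0 sum_ge0) [k g_k].
have down_k : latency_diff k < 0.
  apply: le_lt_trans (equilibrium_latency_diff_le _ (flow_diff_lt0 g_ij)) _.
    exact: flow_diff_gt0.
  by rewrite ltNge.
by exists k; rewrite leNgt down_k mulN1r oppr_lt0.
Qed.

Definition walk_rel : rel ('I_n + 'I_m) := fun u v =>
  match u, v with
  | inl i, inr j => 0 < signed_diff i j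
  | inr j, inl i => signed_diff i j < 0
  | _, _ => false
  end.

Lemma walk_rel_irr : irreflexive walk_rel.
Proof. by case. Qed.

Lemma walk_rel_support : subrel walk_rel (support_graph fstar).
Proof.
have diff_support i j : signed_diff i j != 0 -> 0 < fstar i j.
  by rewrite mulf_eq0 negb_or => /andP[_]; apply: flow_diff_support.
by move=> [i|j] [i'|j'] //= s; apply: diff_support; rewrite neq_lt s ?orbT.
Qed.

Lemma walk_rel_nonbacktracking u v :
  walk_rel u v -> exists2 w, w != u & walk_rel v w.
Proof.
case: u v => [i|j] [i'|j'] //= s.
- have [k s_k] := signed_diff_type_step s.
  by exists (inl k) => //; apply/eqP => -[ki]; move: s_k; rewrite ki ltNge ltW.
- have [k s_k] := signed_diff_road_step s.
  by exists (inr k) => //; apply/eqP => -[kj]; move: s_k; rewrite kj ltNge ltW.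
Qed.

Lemma equilibrium_eq_opt : acyclic_graph (support_graph fstar) -> f =2 fstar.
Proof.
move=> acyclic i j; apply/eqP; rewrite -subr_eq0; apply/negP => /negP g_ij.
have [u [v uv]] : exists u v, walk_rel u v.
  have : signed_diff i j != 0.
    by rewrite mulf_neq0 // /road_sign; case: ifP; rewrite ?oppr_eq0 oner_eq0.
  rewrite neq_lt => /orP[s_ij | s_ij]; first by exists (inr j), (inl i).
  by exists (inl i), (inr j).
have [c [size_c ucycle_c]] := nonbacktracking_cycle
  walk_rel_irr walk_rel_support walk_rel_nonbacktracking uv.
exact: acyclic size_c ucycle_c.
Qed.

End Uniqueness.
End OptimalTolls.

Theorem theorem2 (R : realType) (n m : nat)
  (a : 'I_n -> 'I_m -> R) (b : 'I_n -> R) (d : 'I_m -> R)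
  (fstar : 'I_n -> 'I_m -> R) (mu : R) :
  (forall j, 0 <= d j) ->
  (forall i, 0 <= b i) ->
  (forall i j, 0 < a i j) ->
  feasible d fstar ->
  (forall g : 'I_n -> 'I_m -> R, feasible d g ->
     social_cost a b fstar <= social_cost a b g) ->
  acyclic_graph (support_graph fstar) ->
  exists P0 : R, forall P : R, P0 <= P ->
    forall f : 'I_n -> 'I_m -> R,
      equilibrium a b d (opt_tolls a b fstar mu P) f <->
      (forall i j, f i j = fstar i j).
Proof.
move=> d_ge0 b_ge0 a_gt0 fstar_feasible _ acyclic.
have bound_ge0 := latency_bound_ge0 (fun i j => ltW (a_gt0 i j)) b_ge0 d_ge0.
exists (mu + latency_bound a b d + 1) => P P_ge f.
have P_large : mu + latency_bound a b d < P by lra.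
split=> [f_equilibrium | f_fstar].
  exact: (equilibrium_eq_opt a_gt0 b_ge0 fstar_feasible P_large
            f_equilibrium acyclic).
apply: (eq_equilibrium (fun i j => esym (f_fstar i j))).
by apply: (opt_tolls_equilibrium a_gt0 b_ge0 fstar_feasible); lra.
Qed.
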